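(* Let $[m]=X_1\cup\dots\cup X_k$ with the $X_i$ pairwise disjoint sets of size $n$, let $v_i$ be the smallest element of $X_i$, and let $k\ge\ell\ge\ell'\ge t\ge1$. Suppose that $\mathcal{F}\subseteq\mathcal{H}(n,k,\ell)$ and $\mathcal{G}\subseteq\mathcal{H}(n,k,\ell')$ are shifted and cross $t$-intersecting. Then $\mathcal{A}(\mathcal{F})\subseteq\{A\subseteq[k]:|A|\le\ell\}$ and $\mathcal{A}(\mathcal{G})\subseteq\{A\subseteq[k]:|A|\le\ell'\}$ are cross $t$-intersecting.
   Context: Here $m=kn$ with the natural order on $[m]$. $\mathcal{H}(n,k,\ell)=\{H\subseteq[m]:|H|=\ell,\ |H\cap X_i|\le1\ \forall i\in[k]\}$. For a family $\mathcal{F}$ of subsets and $i<j$, the shifting operator is $s_{i,j}(\mathcal{F})=\{s_{i,j}(F):F\in\mathcal{F}\}$ where $s_{i,j}(F)=(F\setminus\{j\})\cup\{i\}$ if $j\in F$, $i\notin F$ and $(F\setminus\{j\})\cup\{i\}\notin\mathcal{F}$, and $s_{i,j}(F)=F$ otherwise. A family $\mathcal{F}\subseteq\mathcal{H}(n,k,\ell)$ is shifted if $s_{i,j}(\mathcal{F})=\mathcal{F}$ for all $i<j$ lying in the same $X_a$ for some $a\in[k]$. For $H\in\mathcal{H}(n,k,\ell)$, $A(H)=\{i\in[k]: H\cap X_i=\{v_i\}\}$, and $\mathcal{A}(\mathcal{F})=\{A(F):F\in\mathcal{F}\}$. Families $\mathcal{F},\mathcal{G}$ are cross $t$-intersecting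 if $|F\cap G|\ge t$ for all $F\in\mathcal{F},G\in\mathcal{G}$. *)

From mathcomp Require Import all_boot all_order.
Set Implicit Arguments. Unset Strict Implicit. Unset Printing Implicit Defensive.

Definition shift_set (T : finType) (i j : T) (FF : {set {set T}}) (S : {set T})
  : {set T} :=
  if (j \in S) && (i \notin S) && ((i |: (S :\ j)) \notin FF)
  then i |: (S :\ j) else S.

Definition shift_fam (T : finType) (i j : T) (FF : {set {set T}}) : {set {set T}} :=
  [set shift_set i j FF S | S in FF].

Definition Hfam (m k l : nat) (X : 'I_k -> {set 'I_m}) : {set {set 'I_m}} :=
  [set H : {set 'I_m} | (#|H| == l) && [forall a : 'I_k, #|H :&: X a| <= 1]].

Definition shifted (m k : nat) (X : 'I_k -> {set 'I_m}) (FF : {set {set 'I_m}}) :=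
  forall i j : 'I_m, (i < j)%N -> (exists a : 'I_k, (i \in X a) && (j \in X a)) ->
    shift_fam i j FF = FF.

Definition A_of (m k : nat) (X : 'I_k -> {set 'I_m}) (v : 'I_k -> 'I_m)
  (H : {set 'I_m}) : {set 'I_k} :=
  [set i : 'I_k | H :&: X i == [set v i]].

Definition A_fam (m k : nat) (X : 'I_k -> {set 'I_m}) (v : 'I_k -> 'I_m)
  (FF : {set {set 'I_m}}) : {set {set 'I_k}} :=
  [set A_of X v F | F in FF].

Definition cross_tint (T : finType) (t : nat) (FF GG : {set {set T}}) : Prop :=
  forall F G, F \in FF -> G \in GG -> (t <= #|F :&: G|)%N.

From mathcomp Require Import all_boot all_order.
Set Implicit Arguments. Unset Strict Implicit.

(* Write V for the set of minimal elements v_a.  For a set H meeting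
   every part at most once, a is in A(H) iff v_a is in H, so v maps
   A(F) :&: A(G) bijectively onto F :&: G :&: V.  Given F in a shifted family
   and G with |F :&: G| >= t, every x in F :&: G outside V can be shifted down
   to the v_a of its part; as v_a is not in G this only loses x from F :&: G.
   Repeating, we reach F' in the family with F' :&: G contained in
   F :&: G :&: V, whence t <= |F' :&: G| <= |F :&: G :&: V| = |A(F) :&: A(G)|. *)

Lemma mem_shifted m k (X : 'I_k -> {set 'I_m}) (FF : {set {set 'I_m}})
    (F : {set 'I_m}) (i j : 'I_m) (a : 'I_k) :
  shifted X FF -> F \in FF -> (i < j)%N -> i \in X a -> j \in X a ->
  j \in F -> i \notin F -> i |: (F :\ j) \in FF.
Proof.
move=> FF_shifted FF_F lt_ij iXa jXa jF iNF.
have shift_FF : shift_fam i j FF = FF.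
  by apply: FF_shifted => //; exists a; rewrite iXa jXa.
apply: contraT => FF'N; case/negP: (FF'N).
rewrite -shift_FF; apply/imsetP; exists F => //.
by rewrite /shift_set jF iNF FF'N.
Qed.

Section PartitionedGroundSet.

Variables (m k : nat) (X : 'I_k -> {set 'I_m}) (v : 'I_k -> 'I_m).
Hypothesis X_disjoint : forall a b : 'I_k, a != b -> [disjoint X a & X b].
Hypothesis X_cover : \bigcup_(a < k) X a = [set: 'I_m].
Hypothesis v_in_part : forall a, v a \in X a.
Hypothesis v_min : forall a x, x \in X a -> (v a <= x)%N.

Let V := [set v a | a : 'I_k].

Definition partial_transversal (H : {set 'I_m}) :=
  forall a : 'I_k, (#|H :&: X a| <= 1)%N.

Lemma mem_Hfam l (H : {set 'I_m}) :
  H \in Hfam l X -> #|H| = l /\ partial_transversal H.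
Proof. by rewrite inE => /andP[/eqP -> /forallP]. Qed.

Lemma v_inj : injective v.
Proof.
move=> a b vab; have [//|neq_ab] := eqVneq a b.
by have := disjointFr (X_disjoint neq_ab) (v_in_part a); rewrite vab v_in_part.
Qed.

Lemma exists_part (x : 'I_m) : exists a, x \in X a.
Proof.
have : x \in \bigcup_(a < k) X a by rewrite X_cover inE.
by case/bigcupP=> a _; exists a.
Qed.

Lemma partial_transversal_eq (H : {set 'I_m}) a x y :
  partial_transversal H -> x \in H -> y \in H -> x \in X a -> y \in X a -> x = y.
Proof.
move=> /(_ a)/card_le1_eqP H1 xH yH xXa yXa.
by apply: H1; rewrite inE ?xH ?yH.
Qed.

Lemma mem_A_of (H : {set 'I_m}) a :
  partial_transversal H -> (a \in A_of X v H) = (v a \in H).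
Proof.
move=> H_tr; rewrite inE; apply/eqP/idP => [HXa | vaH].
  by have := set11 (v a); rewrite -HXa => /setIP[].
apply/eqP; rewrite eq_sym eqEcard sub1set inE vaH v_in_part cards1.
exact: H_tr.
Qed.

Lemma imset_A_of (H : {set 'I_m}) :
  partial_transversal H -> v @: A_of X v H = H :&: V.
Proof.
move=> H_tr; apply/setP=> y; rewrite inE.
apply/imsetP/andP => [[a aA ->] | [yH /imsetP[a _ y_va]]].
  by rewrite -(mem_A_of _ H_tr) aA imset_f.
by exists a; rewrite // mem_A_of -?y_va.
Qed.

Lemma card_A_of (H : {set 'I_m}) :
  partial_transversal H -> #|A_of X v H| = #|H :&: V|.
Proof. by move=> H_tr; rewrite -imset_A_of // card_imset //; apply: v_inj. Qed.

Lemma card_A_ofI (F G : {set 'I_m}) :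
  partial_transversal F -> partial_transversal G ->
  #|A_of X v F :&: A_of X v G| = #|F :&: G :&: V|.
Proof.
move=> F_tr G_tr; rewrite -(card_imset _ v_inj) imsetI ?imset_A_of //.
  by rewrite setIACA setIid.
by move=> ? ? _ _; apply: v_inj.
Qed.

Variables (FF : {set {set 'I_m}}) (G : {set 'I_m}).
Hypothesis FF_shifted : shifted X FF.
Hypothesis FF_tr : forall F, F \in FF -> partial_transversal F.
Hypothesis G_tr : partial_transversal G.

(* Shifting x down to the minimum v_a of its part is allowed since F meets
   X_a only in x, and v_a cannot lie in G since G meets X_a only in x. *)
Lemma shift_out_of_intersection (F : {set 'I_m}) x :
  F \in FF -> x \in F :&: G -> x \notin V ->
  exists2 F', F' \in FF & F' :&: G \subset (F :&: G) :\ x.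
Proof.
move=> FF_F /setIP[xF xG] xNV; have [a xXa] := exists_part x.
have va_neq_x : v a != x by apply: contraNneq xNV => <-; apply: imset_f.
have lt_va_x : (v a < x)%N by rewrite ltn_neqAle va_neq_x v_min.
have vaNF : v a \notin F.
  apply: contra va_neq_x => vaF.
  by rewrite (partial_transversal_eq (FF_tr FF_F) vaF xF (v_in_part a) xXa).
exists (v a |: (F :\ x)).
  exact: mem_shifted lt_va_x (v_in_part a) xXa xF vaNF.
apply/subsetP=> y; rewrite !inE => /andP[/orP[/eqP-> | /andP[yNx yF]] yG].
  by rewrite (partial_transversal_eq G_tr yG xG (v_in_part a) xXa) eqxx in va_neq_x.
by rewrite yNx yF yG.
Qed.

Lemma shift_into_minima (F : {set 'I_m}) :
  F \in FF -> exists2 F', F' \in FF & F' :&: G \subset F :&: G :&: V.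
Proof.
have [N] := ubnP #|F :&: G :\: V|; elim: N => // N IH in F *.
rewrite ltnS => leN FF_F.
have [/eqP outside0 | /set0Pn[x]] := boolP (F :&: G :\: V == set0).
  exists F => //; apply/subsetP=> y yFG; rewrite inE yFG /=.
  apply: contraT => yNV; suff : y \in F :&: G :\: V by rewrite outside0 inE.
  by rewrite inE yNV.
rewrite inE => /andP[xNV xFG].
have [F1 FF_F1 sub_F1] := shift_out_of_intersection FF_F xFG xNV.
have [|F2 FF_F2 sub_F2] := IH F1 _ FF_F1.
  apply: leq_trans leN; rewrite (cardsD1 x (F :&: G :\: V)) inE xNV xFG ltnS.
  apply: subset_leq_card; apply/subsetP=> y /setDP[yF1G yNV].
  by have := subsetP sub_F1 y yF1G; rewrite !inE yNV => /and3P[-> -> ->].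
exists F2 => //; apply: subset_trans sub_F2 _; rewrite setSI //.
by apply: subset_trans sub_F1 (subsetDl _ _).
Qed.

Lemma cross_tint_A_of t (F : {set 'I_m}) :
  (forall F', F' \in FF -> (t <= #|F' :&: G|)%N) -> F \in FF ->
  (t <= #|A_of X v F :&: A_of X v G|)%N.
Proof.
move=> FG_tint FF_F; rewrite card_A_ofI //; last exact: FF_tr.
have [F' FF_F' sub_F'] := shift_into_minima FF_F.
by apply: leq_trans (FG_tint _ FF_F') (subset_leq_card sub_F').
Qed.

End PartitionedGroundSet.

Theorem lemma3p2 (n k l l' t : nat) (X : 'I_k -> {set 'I_(k * n)})
    (v : 'I_k -> 'I_(k * n))
    (HXdisj : forall a b : 'I_k, a != b -> [disjoint X a & X b])
    (HXsize : forall a : 'I_k, #|X a| = n)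
    (HXcover : \bigcup_(a < k) X a = [set: 'I_(k * n)])
    (Hv : forall a : 'I_k, v a \in X a /\ (forall x, x \in X a -> (v a <= x)%N))
    (Hkl : (l <= k)%N) (Hll : (l' <= l)%N) (Hlt : (t <= l')%N) (Ht : (1 <= t)%N)
    (F G : {set {set 'I_(k * n)}})
    (HF : F \subset Hfam l X) (HG : G \subset Hfam l' X)
    (HFs : shifted X F) (HGs : shifted X G)
    (HFG : cross_tint t F G) :
  A_fam X v F \subset [set A : {set 'I_k} | (#|A| <= l)%N] /\
  A_fam X v G \subset [set A : {set 'I_k} | (#|A| <= l')%N] /\
  cross_tint t (A_fam X v F) (A_fam X v G).
Proof.
have v_in_part a : v a \in X a by case: (Hv a).
have v_min a x : x \in X a -> (v a <= x)%N by case: (Hv a) => _; apply.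
have A_fam_card L (FF : {set {set 'I_(k * n)}}) : FF \subset Hfam L X ->
    A_fam X v FF \subset [set A : {set 'I_k} | (#|A| <= L)%N].
  move=> /subsetP sub_FF.
  apply/subsetP=> _ /imsetP[H /sub_FF/mem_Hfam[<- H_tr] ->].
  by rewrite inE (card_A_of HXdisj v_in_part) ?subset_leq_card ?subsetIl.
split; [exact: A_fam_card | split; first exact: A_fam_card].
move=> _ _ /imsetP[F1 FF1 ->] /imsetP[G1 GG1 ->].
have [_ G1_tr] := mem_Hfam (subsetP HG _ GG1).
apply: (cross_tint_A_of HXdisj HXcover v_in_part v_min HFs _ G1_tr) => //.
- by move=> H /(subsetP HF)/mem_Hfam[].
- by move=> H FH; apply: HFG.
Qed.
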